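(* Let $n,d\ge 2$ and $\mathbf h\in\mathbb{R}^{\binom{n+d-1}{d}}$ with $N(\mathbf h)\ge 1$ and $J_{n,d}\mathbf h\ge 0$. Define $\boldsymbol\gamma_0=\mathbf h_0$ and $\boldsymbol\gamma_i=J_{n-1,i-1}\mathbf h_{i-1}+\mathbf h_i$ for $1\le i\le d$. If exactly one of the numbers $R(\boldsymbol\gamma_0),\dots,R(\boldsymbol\gamma_d)$ is nonzero, then $$R(J_{n,d}\mathbf h)\ge \binom{n+1}{3}+1.$$
   Context: For a real vector $\mathbf x$, $N(\mathbf x)$ and $R(\mathbf x)$ denote the numbers of negative and nonzero components; inequalities are componentwise. $J_{m,j}$ is the matrix, with respect to the left lexicographic bases of degree-$j$ and degree-$(j+1)$ monomials in $m$ variables, of multiplication by the sum of the variables ($J_{n,j}$ in $x_1,\dots,x_n$, $J_{n-1,j}$ in $x_2,\dots,x_n$). If $\mathbf h$ is the coordinate vector of $A(x)=\sum_{j=0}^d x_1^{d-j}A_j(x_2,\dots,x_n)$ ($A_j$ homogeneous of degree $j$), then $\mathbf h_j$ is the coordinate vector of $A_j$ in the left lexicographic basis of degree-$j$ monomials in $x_2,\dots,x_n$, and $\mathbf h=(\mathbf h_0,\dots,\mathbf h_d)$. *)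

From HB Require Import structures.
From mathcomp Require Import all_boot all_order all_algebra.
Set Implicit Arguments. Unset Strict Implicit. Unset Printing Implicit Defensive.
Import Order.TTheory GRing.Theory Num.Theory.
Local Open Scope ring_scope.

(* A monomial x_1^{e_1} ... x_m^{e_m} in m variables is encoded by its
   exponent sequence [:: e_1; ...; e_m].
   [mons m j] is the list of all degree-j monomials in m variables in
   LEFT LEXICOGRAPHIC order (x_1^j first, i.e. lexicographically decreasing
   exponent sequences). *)
Fixpoint mons (m j : nat) : seq (seq nat) :=
  match m with
  | 0 => if j == 0%N then [:: [::]] else [::]
  | m'.+1 => flatten [seq [seq e :: s | s <- mons m' (j - e)] | e <- rev (iota 0 j.+1)]
  end.

Definition dimf (m j : nat) : nat := 'C(m + j - 1, j).

Definition monAt (m j : nat) (k : nat) : seq nat := nth [::] (mons m j) k.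

(* J_{m,j}: matrix of multiplication by x_1 + ... + x_m, from degree-j forms
   to degree-(j+1) forms, w.r.t. the left lexicographic bases. *)
Definition Jmx (R : nzRingType) (m j : nat) : 'M[R]_(dimf m j.+1, dimf m j) :=
  \matrix_(r, c) ((#|[set i : 'I_m | monAt m j.+1 r == incr_nth (monAt m j c) i]|)%:R).

Definition Nneg (R : realFieldType) (k : nat) (x : 'cV[R]_k) : nat :=
  #|[set i : 'I_k | x i 0 < 0]|.
Definition Rnz (R : realFieldType) (k : nat) (x : 'cV[R]_k) : nat :=
  #|[set i : 'I_k | x i 0 != 0]|.

Definition coefv (R : nzRingType) (n d : nat) (h : 'cV[R]_(dimf n d)) (mo : seq nat) : R :=
  \sum_(k < dimf n d | monAt n d k == mo) h k 0.

(* h_j : coordinate vector (in x_2..x_n, left lex basis) of A_j, where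
   A(x) = sum_j x_1^(d-j) A_j(x_2,...,x_n). *)
Definition hblock (R : nzRingType) (n d : nat) (h : 'cV[R]_(dimf n d)) (j : nat)
  : 'cV[R]_(dimf n.-1 j) :=
  \col_k coefv h ((d - j)%N :: monAt n.-1 j k).

Definition Rgamma (R : realFieldType) (n d : nat) (h : 'cV[R]_(dimf n d)) (i : nat) : nat :=
  match i with
  | 0 => Rnz (hblock h 0)
  | j.+1 => Rnz (Jmx R n.-1 j *m hblock h j + hblock h j.+1)
  end.

From HB Require Import structures.
From mathcomp Require Import all_boot all_order all_algebra.
From mathcomp Require Import zify.
Set Implicit Arguments. Unset Strict Implicit. Unset Printing Implicit Defensive.
Import Order.TTheory GRing.Theory Num.Theory.

(* Write A = \sum_i x_1^(d-i) A_i(x') and s = x_2 + ... + x_n.  Since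
   (x_1 + s) A = \sum_i x_1^(d+1-i) (A_i + s A_(i-1)), the gamma_i are the blocks of J h,
   the last one being s A_d.  If gamma_k is the only nonzero block with i <= d, then
   A_i = 0 for i < k, A_k = gamma_k >= 0 is positive at some x'^alpha, and
   A_(k+j) = (-s)^j A_k has sign (-1)^j and is nonzero at every x'^(alpha+b) with |b| = j.
   Nonnegativity of the last block s A_d forces d - k to be even, and d - k > 0 because
   h has a negative entry.  So J h is nonzero at x_1^(d+1-k) x'^alpha and at the
   binom(n+d-k-1, d-k+1) >= binom(n+1, 3) monomials x'^(alpha+b) with |b| = d-k+1. *)

Definition is_mon (m j : nat) (s : seq nat) := (size s == m) && (sumn s == j).

Lemma mem_mons m j s : (s \in mons m j) = is_mon m j s.
Proof.
elim: m j s => [|m IH] j s /=.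
  by case: j => [|j]; case: s.
have mem_iota_j e : (e \in rev (iota 0 j.+1)) = (e <= j) by rewrite mem_rev mem_iota.
apply/flattenP/idP => [[t /mapP [e]] | ].
  rewrite mem_iota_j => le_ej -> /mapP [s'].
  by rewrite IH => /andP [/eqP s'_size /eqP s'_sum] ->; rewrite /is_mon /= s'_size s'_sum; lia.
case: s => [|e s] //= /andP [/= /eqP [s_size] /eqP s_sum].
exists [seq e :: s' | s' <- mons m (j - e)].
  by apply/mapP; exists e; rewrite // mem_iota_j; lia.
by apply/mapP; exists s; rewrite // IH /is_mon s_size eqxx /=; lia.
Qed.

Lemma uniq_mons m j : uniq (mons m j).
Proof.
elim: m j => [|m IH] j /=; first by case: j.
apply: (@allpairs_uniq_dep _ (fun _ => _) _ (fun e s => e :: s)).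
- by rewrite rev_uniq -[0 :: iota 1 j]/(iota 0 j.+1) iota_uniq.
- by move=> e _; apply: IH.
- by move=> [x1 y1] [x2 y2] _ _ [-> ->].
Qed.

Lemma dimfS m j : dimf m.+1 j.+1 = dimf m.+1 j + dimf m j.+1.
Proof. by rewrite /dimf !addSn addnS !subn1 /= binS addnC. Qed.

Lemma sum_dimf m j : \sum_(e <- iota 0 j.+1) dimf m (j - e) = dimf m.+1 j.
Proof.
elim: j => [|j IHj]; first by rewrite big_cons big_nil /dimf !bin0.
rewrite dimfS -IHj (_ : iota 0 j.+2 = 0 :: iota 1 j.+1) // big_cons subn0 addnC.
by rewrite -[1%N]/(1 + 0)%N iotaDl big_map; congr (_ + _); apply: eq_bigr.
Qed.

Lemma size_mons m j : size (mons m j) = dimf m j.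
Proof.
elim: m j => [|m IH] j /=.
  by case: j => [|j] //=; rewrite /dimf /= subn1 bin_small.
rewrite size_allpairs_dep -sum_dimf map_rev sumn_rev sumnE big_map.
by apply: eq_bigr => e _.
Qed.

Lemma dimf_homo m : (0 < m)%N -> {homo dimf m : i j / (i <= j)%N}.
Proof.
case: m => // m _; apply: homo_leq => [//|????|j]; first exact: leq_trans.
by rewrite dimfS leq_addr.
Qed.

Lemma is_mon_cons m j t nu : is_mon m.+1 (t + j) (t :: nu) = is_mon m j nu.
Proof. by rewrite /is_mon /= eqSS eqn_add2l. Qed.

Definition decr_nth (s : seq nat) (i : nat) : seq nat := set_nth 0 s i (nth 0 s i).-1.

Lemma size_decr_nth s i : (0 < nth 0 s i)%N -> size (decr_nth s i) = size s.
Proof.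
move=> pos_i; rewrite size_set_nth; apply/maxn_idPr.
by apply: contraTT pos_i; rewrite -ltnNge => /(nth_default 0) ->.
Qed.

Lemma nth_le_sumn s i : (nth 0 s i <= sumn s)%N.
Proof.
by elim: s i => [|x s IH] [|i] //=; [rewrite leq_addr | rewrite (leq_trans (IH i)) ?leq_addl].
Qed.

Lemma sumn_decr_nth s i : (0 < nth 0 s i)%N -> (sumn (decr_nth s i)).+1 = sumn s.
Proof. by rewrite sumn_set_nth0; have := nth_le_sumn s i; lia. Qed.

Lemma eq_incr_nth (mu nu : seq nat) i : size mu = size nu -> (i < size nu)%N ->
  (nu == incr_nth mu i) = (0 < nth 0 nu i)%N && (mu == decr_nth nu i).
Proof.
elim: nu mu i => [|x nu IH] [|y mu] [|i] //= [size_mu] lt_i.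
  by case: x => [|x]; rewrite !eqseq_cons //= eqSS (eq_sym y) (eq_sym mu).
by rewrite !eqseq_cons IH // (eq_sym y); case: (x == y); rewrite ?andbF.
Qed.

Fixpoint mon_mul (a b : seq nat) : seq nat :=
  match a, b with
  | x :: a', y :: b' => (x + y) :: mon_mul a' b'
  | _, _ => [::]
  end.

Lemma is_mon_mul m i j a b : is_mon m i a -> is_mon m j b -> is_mon m (i + j) (mon_mul a b).
Proof.
rewrite /is_mon => /andP [/eqP <- /eqP <-] /andP [/eqP + /eqP <-].
elim: a b => [|x a IH] [|y b] //= [/IH /andP [/eqP -> /eqP ->]].
by rewrite !eqxx; apply/eqP; lia.
Qed.

Lemma mon_mul0 a b : size a = size b -> sumn b = 0%N -> mon_mul a b = a.
Proof.
elim: a b => [|x a IH] [|y b] //= [size_b] /eqP; rewrite addn_eq0 => /andP [/eqP -> /eqP sum_b].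
by rewrite addn0 IH.
Qed.

Lemma decr_nth_mon_mul a b e : size a = size b -> (0 < nth 0 b e)%N ->
  decr_nth (mon_mul a b) e = mon_mul a (decr_nth b e).
Proof.
elim: a b e => [|x a IH] [|y b] [|e] //= [size_b] pos_e.
  by rewrite /decr_nth /=; congr (_ :: _); lia.
by move: (IH _ _ size_b pos_e); rewrite /decr_nth /= => ->.
Qed.

Lemma nth_mon_mul a b e : size a = size b -> nth 0 (mon_mul a b) e = (nth 0 a e + nth 0 b e)%N.
Proof.
elim: a b e => [|x a IH] [|y b] [|e] //= [size_b]; rewrite ?nth_nil //; exact: IH.
Qed.

Lemma mon_mul_inj a b b' : size a = size b -> size a = size b' ->
  mon_mul a b = mon_mul a b' -> b = b'.
Proof.
elim: a b b' => [|x a IH] [|y b] [|y' b'] //= [size_b] [size_b'] [eq_xy /IH ->] //.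
by congr (_ :: _); lia.
Qed.

Lemma nth_gt0_sumn s : (0 < sumn s)%N -> exists2 i, (i < size s)%N & (0 < nth 0 s i)%N.
Proof.
elim: s => [|[|x] s IH] //= pos_s; last by exists 0%N.
by have [i lt_i pos_i] := IH pos_s; exists i.+1.
Qed.

Local Open Scope ring_scope.

(* The coefficient function of (x_1 + ... + x_m) F, where f is that of F. *)
Definition Jfun (R : nmodType) (m : nat) (f : seq nat -> R) (nu : seq nat) : R :=
  \sum_(e < m) if (0 < nth 0 nu e)%N then f (decr_nth nu e) else 0.

Section Jfun.
Variable R : nmodType.
Implicit Types (m : nat) (f g : seq nat -> R) (nu : seq nat).

Lemma eq_Jfun {m f g nu} : f =1 g -> Jfun m f nu = Jfun m g nu.
Proof. by move=> eq_fg; apply: eq_bigr => e _; rewrite eq_fg. Qed.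

Lemma Jfun0 m nu : Jfun m (fun=> 0 : R) nu = 0.
Proof. by apply: big1 => e _; case: ifP. Qed.

Lemma Jfun_out m j f nu : (forall x, ~~ is_mon m j x -> f x = 0) ->
  ~~ is_mon m j.+1 nu -> Jfun m f nu = 0.
Proof.
move=> f_out nu_out; apply: big1 => e _; case: ifP => // pos_e; apply: f_out.
apply: contra nu_out; rewrite /is_mon size_decr_nth // -(sumn_decr_nth pos_e).
by move=> /andP [-> /eqP ->] /=.
Qed.

Lemma Jfun_cons m f t nu : Jfun m.+1 f (t :: nu) =
  (if (0 < t)%N then f (t.-1 :: nu) else 0) + Jfun m (fun x => f (t :: x)) nu.
Proof. by rewrite /Jfun big_ord_recl. Qed.

End Jfun.

Lemma Jfun_scale (R : pzRingType) m c (f : seq nat -> R) nu :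
  c * Jfun m f nu = Jfun m (fun x => c * f x) nu.
Proof. by rewrite mulr_sumr; apply: eq_bigr => e _; case: ifP; rewrite ?mulr0. Qed.

Definition pos_above (R : numDomainType) m j alpha (f : seq nat -> R) :=
  (forall nu, 0 <= f nu) /\ (forall b, is_mon m j b -> 0 < f (mon_mul alpha b)).

Lemma pos_above_Jfun (R : numDomainType) m j alpha (f : seq nat -> R) :
  size alpha = m -> pos_above m j alpha f -> pos_above m j.+1 alpha (Jfun m f).
Proof.
move=> size_alpha [f_ge0 f_gt0]; have Jf_ge0 nu : 0 <= Jfun m f nu.
  by apply: sumr_ge0 => e _; case: ifP.
split=> // b /andP [/eqP size_b /eqP sum_b].
have [|e] := @nth_gt0_sumn b; first by rewrite sum_b.
rewrite size_b => lt_e pos_e.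
rewrite /Jfun (bigD1 (Ordinal lt_e)) //=.
rewrite nth_mon_mul ?size_b // ltn_addl // decr_nth_mon_mul ?size_b //.
apply: lt_le_trans (f_gt0 (decr_nth b e) _) _.
  by rewrite /is_mon size_decr_nth // size_b eqxx -eqSS sumn_decr_nth // sum_b /=.
by rewrite lerDl; apply: sumr_ge0 => i _; case: ifP.
Qed.

Definition gamma (R : nmodType) m (A : nat -> seq nat -> R) (i : nat) (nu : seq nat) : R :=
  A i nu + if i is j.+1 then Jfun m (A j) nu else 0.

Section SignPattern.
Variables (R : realDomainType) (m d k : nat) (A : nat -> seq nat -> R) (alpha : seq nat).
Hypothesis m_gt0 : (0 < m)%N.
Hypothesis k_le_d : (k <= d)%N.
Hypothesis A_out : forall i nu, ~~ is_mon m i nu -> A i nu = 0.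
Hypothesis A_top : forall i nu, (d < i)%N -> A i nu = 0.
Hypothesis A_neg : exists i nu, A i nu < 0.
Hypothesis gamma_ge0 : forall i nu, (i <= d.+1)%N -> is_mon m i nu -> 0 <= gamma m A i nu.
Hypothesis gamma_eq0 : forall i nu, (i <= d)%N -> i != k -> is_mon m i nu -> gamma m A i nu = 0.
Hypothesis alpha_mon : is_mon m k alpha.
Hypothesis gamma_alpha : gamma m A k alpha != 0.

Lemma A_succ i nu : (i < d)%N -> i.+1 != k -> A i.+1 nu = - Jfun m (A i) nu.
Proof.
move=> lt_id neq_ik; apply/eqP; rewrite -addr_eq0; apply/eqP.
have [nu_mon|nu_out] := boolP (is_mon m i.+1 nu); first exact: gamma_eq0.
by rewrite A_out // (Jfun_out (A_out (i := i))) // addr0.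
Qed.

Lemma A_below_k i nu : (i < k)%N -> A i nu = 0.
Proof.
elim: i nu => [|i IH] nu lt_ik.
  have [nu_mon|/A_out //] := boolP (is_mon m 0 nu).
  by rewrite -(addr0 (A 0 nu)); apply: (@gamma_eq0 0) => //; rewrite neq_ltn lt_ik.
rewrite A_succ ?(leq_trans (ltnW lt_ik)) // ?neq_ltn ?lt_ik //.
by rewrite (eq_Jfun (fun x => IH x (ltnW lt_ik))) Jfun0 oppr0.
Qed.

Lemma gamma_at_k nu : gamma m A k nu = A k nu.
Proof.
rewrite /gamma; case: k A_below_k => [|k'] A_below; first by rewrite addr0.
by rewrite (eq_Jfun (fun x => A_below k' x (ltnSn k'))) Jfun0 addr0.
Qed.

Lemma size_alpha : size alpha = m.
Proof. by case/andP: alpha_mon => /eqP. Qed.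

Lemma A_k_ge0 nu : 0 <= A k nu.
Proof.
have [nu_mon|/A_out-> //] := boolP (is_mon m k nu).
by rewrite -gamma_at_k gamma_ge0 // leqW.
Qed.

Lemma A_k_alpha_gt0 : 0 < A k alpha.
Proof. by rewrite lt_def -gamma_at_k gamma_alpha gamma_at_k A_k_ge0. Qed.

Lemma A_sign j : (k + j <= d)%N -> pos_above m j alpha (fun nu => (-1) ^+ j * A (k + j) nu).
Proof.
elim: j => [|j IH] le_kj_d.
  rewrite addn0; split=> [nu | b /andP [/eqP size_b /eqP sum_b]]; rewrite mul1r ?A_k_ge0 //.
  by rewrite mon_mul0 ?size_alpha // A_k_alpha_gt0.
rewrite addnS in le_kj_d *.
have [ge0 gt0] := pos_above_Jfun size_alpha (IH (ltnW le_kj_d)).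
have E nu : (-1) ^+ j.+1 * A (k + j).+1 nu = Jfun m (fun x => (-1) ^+ j * A (k + j) x) nu.
  by rewrite A_succ ?exprS ?mulN1r ?mulrNN ?Jfun_scale //; apply/eqP; lia.
by split=> [nu | b b_mon]; rewrite E; [apply: ge0 | apply: gt0].
Qed.

Lemma gamma_top_sign :
  pos_above m (d - k).+1 alpha (fun nu => (-1) ^+ (d - k) * gamma m A d.+1 nu).
Proof.
have := @A_sign (d - k); rewrite subnKC // => /(_ (leqnn d)) /(pos_above_Jfun size_alpha).
by case=> ge0 gt0; split=> [nu | b b_mon]; rewrite /gamma A_top // add0r Jfun_scale;
  [apply: ge0 | apply: gt0].
Qed.

Lemma even_gap : ~~ odd (d - k).
Proof.
apply/negP => odd_gap; have [_ gt0] := gamma_top_sign.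
pose b := (d - k).+1 :: nseq m.-1 0%N.
have b_mon : is_mon m (d - k).+1 b.
  by rewrite /is_mon /= size_nseq sumn_nseq mul0n addn0 prednK ?eqxx.
have := gt0 b b_mon; rewrite -signr_odd odd_gap expr1 mulN1r oppr_gt0 ltNge gamma_ge0 //.
by have := is_mon_mul alpha_mon b_mon; rewrite addnS subnKC.
Qed.

Lemma k_lt_d : (k < d)%N.
Proof.
rewrite ltn_neqAle k_le_d andbT; apply/eqP => eq_kd.
have [i [nu]] := A_neg; apply/negP; rewrite -leNgt.
case: (ltngtP i k) => [/A_below_k -> // | lt_ki | ->]; last exact: A_k_ge0.
by rewrite A_top // -eq_kd.
Qed.

Lemma sign_pattern : (2 <= d - k)%N /\
  forall b, is_mon m (d - k).+1 b -> 0 < gamma m A d.+1 (mon_mul alpha b).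
Proof.
split; first by move: k_lt_d even_gap; rewrite -subn_gt0; case: (d - k)%N => [|[|]].
move=> b b_mon; have [_ gt0] := gamma_top_sign.
by have := gt0 b b_mon; rewrite -signr_odd (negbTE even_gap) expr0 mul1r.
Qed.

End SignPattern.

Section Coordinates.
Variable R : nzRingType.
Implicit Types (m j : nat) (mu nu : seq nat).

Lemma is_mon_monAt m j (k : 'I_(dimf m j)) : is_mon m j (monAt m j k).
Proof. by rewrite -mem_mons /monAt mem_nth // size_mons. Qed.

Lemma monAt_inj m j : injective (@monAt m j : 'I_(dimf m j) -> seq nat).
Proof.
move=> k k' /eqP; rewrite /monAt nth_uniq ?size_mons ?uniq_mons // => /eqP.
exact: val_inj.
Qed.

Lemma monAt_surj m j mu : is_mon m j mu -> exists k : 'I_(dimf m j), monAt m j k = mu.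
Proof.
rewrite -mem_mons => mu_mon; have lt_mu : (index mu (mons m j) < dimf m j)%N.
  by rewrite -size_mons index_mem.
by exists (Ordinal lt_mu); rewrite /monAt nth_index.
Qed.

Lemma coefv_monAt m j (v : 'cV[R]_(dimf m j)) (k : 'I_(dimf m j)) : coefv v (monAt m j k) = v k 0.
Proof. by rewrite /coefv (big_pred1 k) // => k'; rewrite /= (inj_eq (@monAt_inj m j)). Qed.

Lemma coefv_out m j (v : 'cV[R]_(dimf m j)) mu : ~~ is_mon m j mu -> coefv v mu = 0.
Proof.
move=> mu_out; rewrite /coefv big1 // => k /eqP mu_k.
by rewrite -mu_k is_mon_monAt in mu_out.
Qed.

Lemma coefvD m j (v w : 'cV[R]_(dimf m j)) mu : coefv (v + w) mu = coefv v mu + coefv w mu.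
Proof. by rewrite /coefv -big_split; apply: eq_bigr => k _; rewrite mxE. Qed.

Lemma coefv_Jmx m j (v : 'cV[R]_(dimf m j)) nu : is_mon m j.+1 nu ->
  coefv (Jmx R m j *m v) nu = Jfun m (coefv v) nu.
Proof.
move=> /monAt_surj [r <-]; rewrite coefv_monAt mxE.
have size_monAt j' (c : 'I_(dimf m j')) : size (monAt m j' c) = m.
  by case/andP: (is_mon_monAt c) => /eqP.
under eq_bigr do rewrite mxE -sum1dep_card natr_sum big_mkcond mulr_suml.
rewrite exchange_big; apply: eq_bigr => i _ /=.
under eq_bigr do rewrite eq_incr_nth ?size_monAt // ?ltn_ord //.
case: ifP => _ /=; last by rewrite big1 // => c _; rewrite mul0r.
by rewrite /coefv [RHS]big_mkcond; apply: eq_bigr => c _; case: eqP; rewrite ?mul1r ?mul0r.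
Qed.

End Coordinates.

Section Counting.
Variables (R : realFieldType) (m j : nat).
Implicit Types (v : 'cV[R]_(dimf m j)) (mu : seq nat).

Lemma card_monAt (P : pred (seq nat)) :
  #|[set k : 'I_(dimf m j) | P (monAt m j k)]| = count P (mons m j).
Proof. by rewrite -sum1dep_card -sum1_count (big_nth [::]) size_mons big_mkord. Qed.

Lemma Rnz_count v : Rnz v = count (fun mu => coefv v mu != 0) (mons m j).
Proof. by rewrite /Rnz -card_monAt; apply: eq_card => k; rewrite !inE coefv_monAt. Qed.

Lemma Nneg_count v : Nneg v = count (fun mu => coefv v mu < 0) (mons m j).
Proof. by rewrite /Nneg -card_monAt; apply: eq_card => k; rewrite !inE coefv_monAt. Qed.

Lemma coefv_ge0 v mu : (forall r, 0 <= v r 0) -> 0 <= coefv v mu.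
Proof. by move=> v_ge0; apply: sumr_ge0 => k _. Qed.

Lemma size_le_Rnz v (L : seq (seq nat)) : uniq L ->
  {subset L <= [pred mu | is_mon m j mu && (coefv v mu != 0)]} -> (size L <= Rnz v)%N.
Proof.
move=> L_uniq L_sub; rewrite Rnz_count -size_filter uniq_leq_size // => mu /L_sub /andP [mu_mon].
by rewrite mem_filter mem_mons mu_mon => ->.
Qed.

End Counting.

Section Blocks.
Variables (R : realFieldType) (m d : nat) (h : 'cV[R]_(dimf m.+1 d)).

(* The coefficient function of A_i, extended by 0 beyond i = d. *)
Definition blocks (i : nat) : seq nat -> R :=
  if (i <= d)%N then fun nu => coefv h ((d - i)%N :: nu) else fun=> 0.

Lemma blocks_top i nu : (d < i)%N -> blocks i nu = 0.
Proof. by rewrite /blocks ltnNge => /negPf ->. Qed.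

Lemma blocks_out i nu : ~~ is_mon m i nu -> blocks i nu = 0.
Proof.
rewrite /blocks; case: ifP => // le_id nu_out.
by rewrite coefv_out // -{1}(subnK le_id) is_mon_cons.
Qed.

Lemma blocks_neg : (1 <= Nneg h)%N -> exists i nu, blocks i nu < 0.
Proof.
rewrite Nneg_count -has_count => /hasP [[|t nu]]; rewrite mem_mons // => mu_mon neg.
exists (d - t)%N, nu; rewrite /blocks leq_subr subKn //.
by case/andP: mu_mon => _ /eqP <-; rewrite leq_addr.
Qed.

Lemma coefv_hblock j : (j <= d)%N -> coefv (hblock h j) =1 blocks j.
Proof.
rewrite /blocks => le_jd; rewrite le_jd => nu.
have [nu_mon | nu_out] := boolP (is_mon m j nu).
  by have [k <-] := monAt_surj nu_mon; rewrite coefv_monAt mxE.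
by rewrite !coefv_out // -{1}(subnK le_jd) is_mon_cons.
Qed.

Lemma gamma_blocks i nu : (i <= d.+1)%N -> is_mon m i nu ->
  gamma m blocks i nu = coefv (Jmx R m.+1 d *m h) ((d.+1 - i)%N :: nu).
Proof.
move=> le_id nu_mon; rewrite coefv_Jmx; last by rewrite -{1}(subnK le_id) is_mon_cons.
rewrite Jfun_cons /gamma /blocks; case: i le_id nu_mon => [|j] le_jd nu_mon.
  rewrite leq0n subn0 addr0 (eq_Jfun (g := fun=> 0)) ?Jfun0 ?addr0 // => x.
  by rewrite coefv_out //; apply/negP => /andP [_ /eqP /=]; lia.
rewrite ltnS in le_jd; rewrite subSS le_jd; congr (_ + _).
case: ltnP => [lt_jd | le_dj]; last by rewrite (_ : d - j = 0)%N //; lia.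
by rewrite subn_gt0 lt_jd; congr (coefv _ (_ :: _)); lia.
Qed.

Lemma Rgamma_eq0 i : (i <= d)%N ->
  (Rgamma h i == 0%N) = all (fun nu => gamma m blocks i nu == 0) (mons m i).
Proof.
case: i => [|j] le_id; rewrite /Rgamma Rnz_count -leqn0 leqNgt -has_count -all_predC;
  apply: eq_in_all => nu; rewrite /= negbK.
  by rewrite coefv_hblock // /gamma addr0.
rewrite mem_mons => nu_mon; rewrite coefvD coefv_Jmx // coefv_hblock // addrC.
by rewrite (eq_Jfun (coefv_hblock (ltnW le_id))).
Qed.

Lemma Rnz_Jmx_ge k alpha : (k <= d)%N -> is_mon m k alpha -> gamma m blocks k alpha != 0 ->
  (forall b, is_mon m (d - k).+1 b -> gamma m blocks d.+1 (mon_mul alpha b) != 0) ->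
  ((dimf m (d - k).+1).+1 <= Rnz (Jmx R m.+1 d *m h))%N.
Proof.
move=> le_kd alpha_mon gamma_k gamma_top.
have size_alpha : size alpha = m by case/andP: alpha_mon => /eqP.
pose L := ((d.+1 - k)%N :: alpha) :: [seq 0%N :: mon_mul alpha b | b <- mons m (d - k).+1].
have -> : (dimf m (d - k).+1).+1 = size L by rewrite /= size_map size_mons.
have size_eq_alpha b : b \in mons m (d - k).+1 -> size alpha = size b.
  by rewrite mem_mons size_alpha => /andP [/eqP ->].
apply: size_le_Rnz.
  rewrite /= map_inj_in_uniq ?uniq_mons ?andbT; last first.
    by move=> b b' b_mon b'_mon [] /mon_mul_inj; apply; apply: size_eq_alpha.
  by apply/mapP => -[b _ [eq_0 _]]; lia.
have mul_mon b : b \in mons m (d - k).+1 -> is_mon m d.+1 (mon_mul alpha b).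
  by rewrite mem_mons => /(is_mon_mul alpha_mon); rewrite addnS subnKC.
move=> mu; rewrite inE => /predU1P [-> | /mapP [b b_mon ->]]; rewrite inE; apply/andP; split.
- by have := is_mon_cons m k (d.+1 - k) alpha; rewrite subnK ?alpha_mon // leqW.
- by rewrite -gamma_blocks // leqW.
- by have := is_mon_cons m d.+1 0 (mon_mul alpha b); rewrite add0n mul_mon.
- have := gamma_blocks (leqnn d.+1) (mul_mon b b_mon); rewrite subnn => <-.
  by apply: gamma_top; rewrite -mem_mons.
Qed.
End Blocks.

Theorem lemma5p3 (R : realFieldType) (n d : nat) (h : 'cV[R]_(dimf n d)) :
  (2 <= n)%N -> (2 <= d)%N ->
  (1 <= Nneg h)%N ->
  (forall r, 0 <= (Jmx R n d *m h) r 0) ->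
  (exists2 i, (i <= d)%N & Rgamma h i <> 0%N /\
     forall i', (i' <= d)%N -> i' <> i -> Rgamma h i' = 0%N) ->
  ('C(n.+1, 3) + 1 <= Rnz (Jmx R n d *m h))%N.
Proof.
case: n h => [|m] // h m_gt0 _ h_neg Jh_ge0 [k le_kd [Rk_neq0 Rother_eq0]].
have gamma_ge0 i nu : (i <= d.+1)%N -> is_mon m i nu -> 0 <= gamma m (blocks h) i nu.
  by move=> le_id nu_mon; rewrite gamma_blocks //; apply: coefv_ge0.
have gamma_eq0 i nu : (i <= d)%N -> i != k -> is_mon m i nu -> gamma m (blocks h) i nu = 0.
  move=> le_id /eqP neq_ik; rewrite -mem_mons => nu_mon; apply/eqP; move: nu nu_mon; apply/allP.
  by rewrite -Rgamma_eq0 // Rother_eq0.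
have [alpha alpha_mon gamma_alpha] :
    exists2 alpha, is_mon m k alpha & gamma m (blocks h) k alpha != 0.
  have : Rgamma h k != 0%N by apply/eqP.
  rewrite Rgamma_eq0 // => /allPn [alpha].
  by rewrite mem_mons; exists alpha.
have [gap_ge2 gamma_top_gt0] := sign_pattern m_gt0 le_kd (blocks_out h) (blocks_top h)
  (blocks_neg h_neg) gamma_ge0 gamma_eq0 alpha_mon gamma_alpha.
apply: leq_trans (Rnz_Jmx_ge le_kd alpha_mon gamma_alpha _); last first.
  by move=> b b_mon; rewrite lt0r_neq0 ?gamma_top_gt0.
have -> : 'C(m.+2, 3) = dimf m 3 by rewrite /dimf addnC.
by rewrite addn1 ltnS dimf_homo.
Qed.
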